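(* In the setting of the context, let $P=L^-_{sym}+\tau^+I$, $\bar P=\overline{L^-_{sym}}+\tau^+I$, $Q=L^+_{sym}+\tau^-I$, $\bar Q=\overline{L^+_{sym}}+\tau^-I$, and assume $\|P-\bar P\|\le\Delta_P$ and $\|Q-\bar Q\|\le\Delta_Q$. Then $$\|T-\bar T\|\le\frac{\alpha_s^++\Delta_Q}{\tau^+}\left(\frac{\Delta_P}{\tau^+}+2\sqrt{\frac{\Delta_P}{\tau^+}}\right)+\frac{\Delta_Q}{\tau^+},$$ where $\alpha_s^+=1+\tau^-+\frac{p(1-\eta)}{d_s^+}$.
   Context: SSBM: integers $n\ge2,k\ge2$, $p\in(0,1]$, $\eta\in[0,1/2)$, partition of $[n]$ into nonempty clusters $C_1,\dots,C_k$, $|C_i|=n_i$; edges present independently w.p. $p$, signed $+1$ within and $-1$ across clusters, signs flipped independently w.p. $\eta$. $A^\pm$ positive/negative 0/1 adjacency matrices (of a realization in which all degrees are positive), $D^\pm=\mathrm{diag}(A^\pm\mathbf1)$. $\tau^+>0,\tau^-\ge0$. $L^\pm_{sym}=I-(D^\pm)^{-1/2}A^\pm(D^\pm)^{-1/2}$, $\overline{L^\pm_{sym}}=I-(\mathbb ED^\pm)^{-1/2}\mathbb EA^\pm(\mathbb ED^\pm)^{-1/2}$, $T=(L^-_{sym}+\tau^+I)^{-1/2}(L^+_{sym}+\tau^-I)(L^-_{sym}+\tau^+I)^{-1/2}$, $\bar T$ the same with overlined matrices. $d_s^+=p(ns(1-2\eta)+n\eta-(1-\eta))$ is the expected positive degree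 of a node in a smallest cluster, $s=\min_in_i/n$ (assumed positive). *)

From HB Require Import structures.
From mathcomp Require Import all_boot all_order all_algebra.
From mathcomp Require Import boolp classical_sets reals.
Set Implicit Arguments. Unset Strict Implicit. Unset Printing Implicit Defensive.
Import Order.TTheory GRing.Theory Num.Theory.
Local Open Scope ring_scope.
Local Open Scope classical_set_scope.

Section SSBMDefs.
Variable R : realType.

Definition vnorm (n : nat) (x : 'cV[R]_n) : R := Num.sqrt (\sum_i (x i 0) ^+ 2).

Definition opnorm (n : nat) (A : 'M[R]_n) : R :=
  sup [set vnorm (A *m x) | x in [set x : 'cV[R]_n | vnorm x <= 1]].

Definition psd (n : nat) (A : 'M[R]_n) : Prop :=
  forall x : 'cV[R]_n, 0 <= (x^T *m A *m x) 0 0.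

Definition psd_sqrt (n : nat) (M : 'M[R]_n) : 'M[R]_n :=
  xget 0 [set S : 'M[R]_n | S^T = S /\ psd S /\ S *m S = M].

Definition inv_sqrt (n : nat) (M : 'M[R]_n) : 'M[R]_n := invmx (psd_sqrt M).

Definition deg (n : nat) (A : 'M[R]_n) (i : 'I_n) : R := \sum_j A i j.
Definition diag_inv_sqrt (n : nat) (d : 'I_n -> R) : 'M[R]_n :=
  diag_mx (\row_i (Num.sqrt (d i))^-1).

Definition Lsym (n : nat) (A : 'M[R]_n) : 'M[R]_n :=
  1%:M - diag_inv_sqrt (deg A) *m A *m diag_inv_sqrt (deg A).

(* expected positive / negative adjacency matrices in the SSBM (no self loops) *)
Definition EApos (n k : nat) (c : 'I_n -> 'I_k) (p eta : R) : 'M[R]_n :=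
  \matrix_(i, j) (if i == j then 0 else if c i == c j then p * (1 - eta) else p * eta).
Definition EAneg (n k : nat) (c : 'I_n -> 'I_k) (p eta : R) : 'M[R]_n :=
  \matrix_(i, j) (if i == j then 0 else if c i == c j then p * eta else p * (1 - eta)).

Definition Tmat (n : nat) (Lpos Lneg : 'M[R]_n) (taup taum : R) : 'M[R]_n :=
  inv_sqrt (Lneg + taup%:M) *m (Lpos + taum%:M) *m inv_sqrt (Lneg + taup%:M).

Definition min_cluster (n k : nat) (c : 'I_n -> 'I_k) : nat :=
  \big[minn/n]_(l < k) #|[set i | c i == l]|.

End SSBMDefs.

From HB Require Import structures.
From mathcomp Require Import all_boot all_order all_algebra.
From mathcomp Require Import boolp classical_sets reals.
From mathcomp Require Import complex spectral.
From mathcomp Require Import ring lra.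
Import Order.TTheory GRing.Theory Num.Theory.
Local Open Scope ring_scope.

Set Implicit Arguments. Unset Strict Implicit. Unset Printing Implicit Defensive.

(* Write S, Sb for the principal square roots of P, Pbar and X = S^-1, Y = Sb^-1, so that
   T - Tbar = X (Q - Qbar) X + (X - Y) Qbar X + Y Qbar (X - Y).  Since P, Pbar >= tau+,
   ||X||, ||Y|| <= 1/sqrt tau+.  Testing S^2 - Sb^2 = S (S - Sb) + (S - Sb) Sb on an extreme
   eigenvector of S - Sb gives L = ||S - Sb|| with L^2 <= DeltaP and 2 sqrt(tau+) L <= DeltaP,
   hence ||X - Y|| = ||X (Sb - S) Y|| <= L / tau+.  A normalized Laplacian has spectrum in
   [0, 2], so ||Qbar|| <= 2 + tau- <= 2 alpha (as d_s+ >= 0), and the three terms add up to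
   the claimed bound.  The spectral facts about real symmetric matrices come from an
   orthogonal diagonalization, built from a (necessarily real) complex eigenvalue and
   Householder deflation. *)

Section RealDot.
Variable R : realType.
Implicit Types (n : nat) (a : R).

Definition dot n (u v : 'cV[R]_n) : R := \sum_i u i 0 * v i 0.

Lemma dot_trmx n (u v : 'cV[R]_n) : (u^T *m v) 0 0 = dot u v.
Proof. by rewrite mxE; apply: eq_bigr => i _; rewrite mxE. Qed.

Lemma dotC n (u v : 'cV[R]_n) : dot u v = dot v u.
Proof. by apply: eq_bigr => i _; rewrite mulrC. Qed.

Lemma dotDr n (u v w : 'cV[R]_n) : dot u (v + w) = dot u v + dot u w.
Proof. by rewrite /dot -big_split; apply: eq_bigr => i _; rewrite mxE mulrDr. Qed.

Lemma dotDl n (u v w : 'cV[R]_n) : dot (v + w) u = dot v u + dot w u.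
Proof. by rewrite dotC dotDr !(dotC u). Qed.

Lemma dotZr n a (u v : 'cV[R]_n) : dot u (a *: v) = a * dot u v.
Proof. by rewrite /dot mulr_sumr; apply: eq_bigr => i _; rewrite mxE mulrCA. Qed.

Lemma dotZl n a (u v : 'cV[R]_n) : dot (a *: v) u = a * dot v u.
Proof. by rewrite dotC dotZr dotC. Qed.

Lemma dotNr n (u v : 'cV[R]_n) : dot u (- v) = - dot u v.
Proof. by rewrite -scaleN1r dotZr mulN1r. Qed.

Lemma dotBr n (u v w : 'cV[R]_n) : dot u (v - w) = dot u v - dot u w.
Proof. by rewrite dotDr dotNr. Qed.

Lemma dotBl n (u v w : 'cV[R]_n) : dot (v - w) u = dot v u - dot w u.
Proof. by rewrite !(dotC _ u) dotBr. Qed.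

Lemma dot0r n (u : 'cV[R]_n) : dot u 0 = 0.
Proof. by rewrite /dot big1 // => i _; rewrite mxE mulr0. Qed.

Lemma dot_sqr n (u : 'cV[R]_n) : dot u u = \sum_i u i 0 ^+ 2.
Proof. by apply: eq_bigr => i _; rewrite expr2. Qed.

Lemma dot_ge0 n (u : 'cV[R]_n) : 0 <= dot u u.
Proof. by rewrite dot_sqr; apply: sumr_ge0 => i _; rewrite sqr_ge0. Qed.

Lemma dot_eq0 n (u : 'cV[R]_n) : (dot u u == 0) = (u == 0).
Proof.
apply/idP/eqP => [|->]; last by rewrite dot0r.
rewrite dot_sqr => /eqP/psumr_eq0P u0; apply/matrixP => i j; rewrite ord1 mxE.
by apply/eqP; rewrite -sqrf_eq0 u0 // => k _; rewrite sqr_ge0.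
Qed.

Lemma dot_gt0 n (u : 'cV[R]_n) : u != 0 -> 0 < dot u u.
Proof. by move=> u0; rewrite lt_def dot_ge0 dot_eq0 u0. Qed.

Lemma dot_mulmx n (A : 'M[R]_n) (u v : 'cV[R]_n) : dot u (A *m v) = dot (A^T *m u) v.
Proof. by rewrite -!dot_trmx trmx_mul trmxK mulmxA. Qed.

Lemma dot_sqr_le n (u v : 'cV[R]_n) : dot u v ^+ 2 <= dot u u * dot v v.
Proof.
have [->|v0] := eqVneq v 0; first by rewrite !dot0r expr0n mulr0.
have vv := dot_gt0 v0.
have := dot_ge0 (dot v v *: u - dot u v *: v).
rewrite dotBl !dotBr !dotZl !dotZr (dotC v u) => h.
have : 0 <= dot v v * (dot u u * dot v v - dot u v ^+ 2) by nra.
by rewrite pmulr_rge0 // subr_ge0.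
Qed.

End RealDot.

Section RealEigenvector.
Variable R : realType.
Local Notation Re := (@complex.Re R).
Local Notation Im := (@complex.Im R).

Lemma Re_sum (I : finType) (f : I -> R[i]) : Re (\sum_i f i) = \sum_i Re (f i).
Proof. by elim/big_rec2: _ => // i y1 y2 _ <-; case: (f i); case: y2. Qed.

Lemma Im_sum (I : finType) (f : I -> R[i]) : Im (\sum_i f i) = \sum_i Im (f i).
Proof. by elim/big_rec2: _ => // i y1 y2 _ <-; case: (f i); case: y2. Qed.

Lemma map_mx_Re_mul_real m n p (w : 'M[R[i]]_(m, n)) (A : 'M[R]_(n, p)) :
  map_mx Re (w *m map_mx (real_complex R) A) = map_mx Re w *m A.
Proof.
apply/matrixP => i j; rewrite !mxE Re_sum; apply: eq_bigr => k _.
by rewrite !mxE; case: (w i k) => u v /=; rewrite mulr0 subr0.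
Qed.

Lemma map_mx_Im_mul_real m n p (w : 'M[R[i]]_(m, n)) (A : 'M[R]_(n, p)) :
  map_mx Im (w *m map_mx (real_complex R) A) = map_mx Im w *m A.
Proof.
apply/matrixP => i j; rewrite !mxE Im_sum.
by apply: eq_bigr => k _; rewrite !mxE; case: (w i k) => u v /=; rewrite mulr0 add0r.
Qed.

Lemma symmetric_eigenvector n (A : 'M[R]_n.+1) : A^T = A ->
  exists (l : R) (v : 'cV[R]_n.+1), v != 0 /\ A *m v = l *: v.
Proof.
move=> sA; pose AC := map_mx (real_complex R) A.
have [a /eigenvalueP [w wA w0]] := eigenvalue_closed AC (ltn0Sn n).
pose x := (map_mx Re w)^T; pose y := (map_mx Im w)^T.
have Ax : A *m x = Re a *: x - Im a *: y.
  rewrite -[A]sA -trmx_mul -map_mx_Re_mul_real wA.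
  by apply/matrixP => i j; rewrite !mxE; case: a {wA}; case: (w j i).
have Ay : A *m y = Re a *: y + Im a *: x.
  rewrite -[A]sA -trmx_mul -map_mx_Im_mul_real wA.
  by apply/matrixP => i j; rewrite !mxE; case: a {wA Ax}; case: (w j i).
have xy0 : x != 0 \/ y != 0.
  have [x0|] := eqVneq x 0; last by left.
  have [y0|] := eqVneq y 0; last by right.
  case/eqP: w0; apply/matrixP => i j; rewrite ord1 mxE.
  move/matrixP: x0 => /(_ j 0); move/matrixP: y0 => /(_ j 0); rewrite !mxE.
  by case: (w 0 j) => u v /= -> ->.
have xy_pos : 0 < dot x x + dot y y.
  by case: xy0 => /dot_gt0; [have := dot_ge0 y | have := dot_ge0 x]; lra.
(* symmetry of [A] forces the eigenvalue [a] to be real *)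
have Ima0 : Im a = 0.
  have := dot_mulmx A x y; rewrite sA Ay Ax dotDr dotBl !dotZr !dotZl => h.
  have : Im a * (dot x x + dot y y) = 0 by lra.
  by move/eqP; rewrite mulf_eq0 (gt_eqF xy_pos) orbF => /eqP.
rewrite Ima0 scale0r subr0 in Ax; rewrite Ima0 scale0r addr0 in Ay.
by exists (Re a); case: xy0 => ?; [exists x | exists y].
Qed.

Lemma householder_reflection n (v : 'cV[R]_n.+1) : dot v v = 1 ->
  exists H : 'M[R]_n.+1, [/\ H^T = H, H *m H = 1%:M & H *m delta_mx 0 0 = v].
Proof.
move=> vv; set e : 'cV[R]_n.+1 := delta_mx 0 0.
have dot_e u : dot e u = u 0 0 by rewrite -dot_trmx trmx_delta -rowE mxE.
have ee : dot e e = 1 by rewrite dot_e mxE.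
have [->|ve] := eqVneq v e; first by exists 1%:M; rewrite trmx1 !mul1mx.
set w := v - e; have w_gt0 : 0 < dot w w by rewrite dot_gt0 // subr_eq0.
have ww : dot w w = 2 - 2 * v 0 0.
  by rewrite /w dotBl !dotBr vv ee (dotC v e) dot_e; ring.
have we : dot w e = v 0 0 - 1 by rewrite /w dotBl ee dotC dot_e.
have wv : v = w + e by rewrite /w subrK.
clearbody w; set c := 2 / dot w w.
have outer u : w *m w^T *m u = dot w u *: w.
  by rewrite -mulmxA [w^T *m u]mx11_scalar dot_trmx mul_mx_scalar.
exists (1%:M - c *: (w *m w^T)); split.
- by rewrite linearB /= trmx1 linearZ /= trmx_mul trmxK.
- have cc : c * (c * dot w w) = c + c by rewrite /c; field; rewrite gt_eqF.
  have WW : w *m w^T *m (w *m w^T) = dot w w *: (w *m w^T).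
    by rewrite mulmxA outer scalemxAl.
  rewrite mulmxBr !mulmxBl mul1mx mulmx1 -scalemxAl -!scalemxAr WW !scalerA.
  by rewrite -mulrA cc scalerDl mul1mx opprB addrK subrK.
- rewrite mulmxBl mul1mx -scalemxAl outer we scalerA.
  have -> : c * (v 0 0 - 1) = -1 by rewrite /c ww; field; rewrite -ww gt_eqF.
  by rewrite scaleN1r opprK wv addrC.
Qed.

End RealEigenvector.

Section Orthodiag.
Variable R : realType.

Lemma unit_eigenvector n (A : 'M[R]_n.+1) : A^T = A ->
  exists (l : R) (v : 'cV[R]_n.+1), dot v v = 1 /\ A *m v = l *: v.
Proof.
move=> /symmetric_eigenvector [l [v [v0 Av]]].
have vv_gt0 := dot_gt0 v0; set k := (Num.sqrt (dot v v))^-1.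
exists l, (k *: v); split; last by rewrite -scalemxAr Av !scalerA mulrC.
rewrite dotZl dotZr mulrA -expr2 exprVn sqr_sqrtr ?dot_ge0 //.
by rewrite mulVf // gt_eqF.
Qed.

Lemma symmetric_deflation n (B : 'M[R]_(1 + n)) l : B^T = B ->
  B *m delta_mx 0 0 = l *: (delta_mx 0 0 : 'cV_(1 + n)) -> B = block_mx l%:M 0 0 (drsubmx B).
Proof.
move=> sB Be.
have Bi0 i : B i 0 = l * (i == 0)%:R.
  by move/matrixP: Be => /(_ i 0); rewrite -colE !mxE andbT.
have l0 : lshift n (0 : 'I_1) = 0 by apply/val_inj.
have r0 j : (rshift 1 j == 0 :> 'I_(1 + n)) = false by [].
rewrite -[LHS]submxK; congr block_mx; apply/matrixP => i j; rewrite !ord1 !mxE l0.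
- by rewrite Bi0 eqxx mulr1.
- by rewrite -sB mxE Bi0 r0 mulr0.
- by rewrite Bi0 r0 mulr0.
Qed.

Theorem symmetric_orthodiag n (A : 'M[R]_n) : A^T = A ->
  exists (U : 'M[R]_n) (d : 'rV[R]_n), U *m U^T = 1%:M /\ A = U^T *m diag_mx d *m U.
Proof.
elim: n A => [|n IH] A sA.
  by exists 1%:M, 0; split; [rewrite trmx1 mulmx1 | apply/matrixP => -[]].
have [l [v [vv Av]]] := unit_eigenvector sA.
have [H [sH HH He]] := householder_reflection vv.
pose B : 'M[R]_(1 + n) := H *m A *m H.
have sB : B^T = B by rewrite /B !trmx_mul sH sA mulmxA.
have Be : B *m delta_mx 0 0 = l *: (delta_mx 0 0 : 'cV_(1 + n)).
  by rewrite /B -!mulmxA He Av -scalemxAr -He mulmxA HH mul1mx.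
have sA' : (drsubmx B)^T = drsubmx B by rewrite trmx_drsub sB.
have [U' [d' [UU' A'E]]] := IH _ sA'.
pose U1 : 'M[R]_(1 + n) := block_mx 1%:M 0 0 U'.
have UU1 : U1 *m U1^T = 1%:M.
  rewrite /U1 tr_block_mx !trmx0 trmx1 mulmx_block !mul0mx !mulmx0 !add0r !addr0.
  by rewrite mul1mx UU' -scalar_mx_block.
have BU : B = U1^T *m diag_mx (row_mx l%:M d') *m U1.
  rewrite {1}(symmetric_deflation sB Be) A'E /U1 tr_block_mx !trmx0 trmx1 diag_mx_row.
  rewrite !mulmx_block !mul0mx !mulmx0 !add0r !addr0 mul1mx mulmx1 !mul0mx.
  by congr block_mx; apply/matrixP => i j; rewrite !ord1 !mxE.
exists (U1 *m H), (row_mx l%:M d'); split.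
  by rewrite trmx_mul sH mulmxA -(mulmxA U1) HH mulmx1 UU1.
have -> : A = H *m B *m H by rewrite /B !mulmxA HH mul1mx -mulmxA HH mulmx1.
by rewrite BU trmx_mul sH !mulmxA.
Qed.

End Orthodiag.

Section OrthodiagForms.
Variables (R : realType) (n : nat) (U : 'M[R]_n) (d : 'rV[R]_n).
Hypothesis UU : U *m U^T = 1%:M.
Let A := U^T *m diag_mx d *m U.

Lemma dot_orthomx (x : 'cV[R]_n) : dot x x = \sum_i (U *m x) i 0 ^+ 2.
Proof. by rewrite -dot_sqr dot_mulmx mulmxA (mulmx1C UU) mul1mx. Qed.

Lemma orthodiag_qf (x : 'cV[R]_n) : dot x (A *m x) = \sum_i d 0 i * (U *m x) i 0 ^+ 2.
Proof.
rewrite /A -!mulmxA dot_mulmx trmxK; set y := U *m x; clearbody y.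
by apply: eq_bigr => i _; rewrite mul_diag_mx mxE expr2 mulrCA.
Qed.

Lemma orthodiag_sqnorm (x : 'cV[R]_n) :
  dot (A *m x) (A *m x) = \sum_i d 0 i ^+ 2 * (U *m x) i 0 ^+ 2.
Proof.
rewrite /A -!mulmxA dot_mulmx trmxK mulmxA UU mul1mx dot_sqr; set y := U *m x; clearbody y.
by apply: eq_bigr => i _; rewrite mul_diag_mx mxE exprMn.
Qed.

Definition orthodiag_vec (i : 'I_n) : 'cV[R]_n := U^T *m delta_mx i 0.

Lemma orthodiag_vec_norm i : dot (orthodiag_vec i) (orthodiag_vec i) = 1.
Proof.
rewrite dot_mulmx trmxK mulmxA UU mul1mx -dot_trmx trmx_delta mul_delta_mx.
by rewrite mxE !eqxx.
Qed.

Lemma orthodiag_vecP i : A *m orthodiag_vec i = d 0 i *: orthodiag_vec i.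
Proof.
rewrite /A /orthodiag_vec -!mulmxA [U *m (U^T *m _)]mulmxA UU mul1mx.
rewrite mul_diag_mx scalemxAr; congr (_ *m _).
by apply/matrixP => a b; rewrite !mxE; case: eqP => [->|]; rewrite ?mulr1 ?mulr0.
Qed.

Lemma orthodiag_vec_qf i : dot (orthodiag_vec i) (A *m orthodiag_vec i) = d 0 i.
Proof. by rewrite orthodiag_vecP dotZr orthodiag_vec_norm mulr1. Qed.

End OrthodiagForms.

Section SymmetricForms.
Variable R : realType.
Implicit Types t : R.

Lemma symmetric_top_eigenvector n (A : 'M[R]_n.+1) : A^T = A ->
  exists (v : 'cV[R]_n.+1) (l : R), [/\ dot v v = 1, A *m v = l *: v &
    forall x, dot (A *m x) (A *m x) <= l ^+ 2 * dot x x].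
Proof.
move=> /symmetric_orthodiag [U [d [UU ->]]].
have [i _ imax] := @arg_maxP _ R _ (0 : 'I_n.+1) predT (fun i => d 0 i ^+ 2) isT.
exists (orthodiag_vec U i), (d 0 i); split.
- exact: orthodiag_vec_norm.
- exact: orthodiag_vecP.
move=> x; rewrite orthodiag_sqnorm // (dot_orthomx UU) mulr_sumr.
by apply: ler_sum => j _; rewrite ler_wpM2r ?sqr_ge0 //; exact: imax.
Qed.

Lemma psd_sqrt_exists n (A : 'M[R]_n) : A^T = A -> (forall x, 0 <= dot x (A *m x)) ->
  exists S : 'M[R]_n, [/\ S^T = S, (forall x, 0 <= dot x (S *m x)) & S *m S = A].
Proof.
move=> /symmetric_orthodiag [U [d [UU ->]]] psdA.
have d_ge0 i : 0 <= d 0 i by have := psdA (orthodiag_vec U i); rewrite orthodiag_vec_qf.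
pose s := \row_i Num.sqrt (d 0 i).
exists (U^T *m diag_mx s *m U); split.
- by rewrite !trmx_mul trmxK tr_diag_mx mulmxA.
- move=> x; rewrite orthodiag_qf //; apply: sumr_ge0 => i _.
  by rewrite mxE mulr_ge0 ?sqrtr_ge0 ?sqr_ge0.
rewrite -!mulmxA; congr (_ *m _); rewrite !mulmxA -[_ *m U *m U^T]mulmxA UU mulmx1.
rewrite mulmx_diag; congr (diag_mx _ *m _).
by apply/matrixP => a b; rewrite ord1 !mxE -expr2 sqr_sqrtr.
Qed.

Lemma psd_sqrt_qf_lower n (S : 'M[R]_n) t : S^T = S ->
  (forall x, 0 <= dot x (S *m x)) -> (forall x, t * dot x x <= dot x (S *m S *m x)) ->
  forall x, Num.sqrt t * dot x x <= dot x (S *m x).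
Proof.
move=> /symmetric_orthodiag [U [d [UU SE]]] psdS low x.
have d_ge0 i : 0 <= d 0 i.
  by have := psdS (orthodiag_vec U i); rewrite SE orthodiag_vec_qf.
have d_low i : Num.sqrt t <= d 0 i.
  have Sv : S *m orthodiag_vec U i = d 0 i *: orthodiag_vec U i by rewrite SE orthodiag_vecP.
  have := low (orthodiag_vec U i); rewrite -mulmxA Sv -scalemxAr Sv scalerA dotZr.
  rewrite orthodiag_vec_norm // !mulr1 -expr2 => /ler_wsqrtr.
  by rewrite sqrtr_sqr ger0_norm.
rewrite SE orthodiag_qf // (dot_orthomx UU) mulr_sumr.
by apply: ler_sum => i _; rewrite ler_wpM2r ?sqr_ge0.
Qed.

End SymmetricForms.

Section OperatorNorm.
Variable R : realType.
Implicit Types (n : nat) (a c : R).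

Lemma vnormE n (x : 'cV[R]_n) : vnorm x = Num.sqrt (dot x x).
Proof. by rewrite /vnorm dot_sqr. Qed.

Lemma vnorm_ge0 n (x : 'cV[R]_n) : 0 <= vnorm x.
Proof. by rewrite vnormE sqrtr_ge0. Qed.

Lemma vnorm_sqr n (x : 'cV[R]_n) : vnorm x ^+ 2 = dot x x.
Proof. by rewrite vnormE sqr_sqrtr // dot_ge0. Qed.

Lemma vnormZ n a (x : 'cV[R]_n) : vnorm (a *: x) = `|a| * vnorm x.
Proof. by rewrite !vnormE dotZl dotZr mulrA -expr2 sqrtrM ?sqr_ge0 // sqrtr_sqr. Qed.

Lemma vnorm0 n : vnorm (0 : 'cV[R]_n) = 0.
Proof. by rewrite vnormE dot0r sqrtr0. Qed.

Lemma vnorm_eq0 n (x : 'cV[R]_n) : (vnorm x == 0) = (x == 0).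
Proof. by rewrite -dot_eq0 -vnorm_sqr sqrf_eq0. Qed.

Lemma dot_le_vnorm n (u v : 'cV[R]_n) : `|dot u v| <= vnorm u * vnorm v.
Proof.
rewrite !vnormE -sqrtrM ?dot_ge0 // -sqrtr_sqr.
by apply: ler_wsqrtr; apply: dot_sqr_le.
Qed.

Lemma vnormD n (u v : 'cV[R]_n) : vnorm (u + v) <= vnorm u + vnorm v.
Proof.
rewrite -(ger0_norm (addr_ge0 (vnorm_ge0 u) (vnorm_ge0 v))) -sqrtr_sqr vnormE.
apply: ler_wsqrtr; rewrite dotDl !dotDr (dotC v u) sqrrD !vnorm_sqr.
by have := dot_le_vnorm u v; have := ler_norm (dot u v); lra.
Qed.

Definition mxbound n (M : 'M[R]_n) c := forall x, vnorm (M *m x) <= c * vnorm x.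

Lemma mxbound_sqr n (M : 'M[R]_n) c : 0 <= c ->
  (forall x, dot (M *m x) (M *m x) <= c ^+ 2 * dot x x) -> mxbound M c.
Proof.
move=> c0 Mc x; rewrite !vnormE -(ger0_norm c0) -sqrtr_sqr -sqrtrM ?sqr_ge0 //.
exact: ler_wsqrtr.
Qed.

Lemma mxboundM n (M N : 'M[R]_n) a c : 0 <= a ->
  mxbound M a -> mxbound N c -> mxbound (M *m N) (a * c).
Proof.
move=> a0 Ma Nc x; rewrite -mulmxA; apply: le_trans (Ma _) _.
by rewrite -mulrA ler_wpM2l.
Qed.

Lemma mxboundD n (M N : 'M[R]_n) a c :
  mxbound M a -> mxbound N c -> mxbound (M + N) (a + c).
Proof.
move=> Ma Nc x; rewrite mulmxDl mulrDl; apply: le_trans (vnormD _ _) _.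
exact: lerD.
Qed.

Lemma mxboundN n (M : 'M[R]_n) a : mxbound M a -> mxbound (- M) a.
Proof. by move=> Ma x; rewrite mulNmx -scaleN1r vnormZ normrN normr1 mul1r. Qed.

Lemma mxbound_rows n (M : 'M[R]_n) :
  mxbound M (Num.sqrt (\sum_i dot (row i M)^T (row i M)^T)).
Proof.
apply: mxbound_sqr => [|x]; first exact: sqrtr_ge0.
rewrite sqr_sqrtr ?sumr_ge0 // => [|i _]; last exact: dot_ge0.
rewrite dot_sqr mulr_suml; apply: ler_sum => i _.
have -> : (M *m x) i 0 = dot (row i M)^T x.
  by rewrite mxE; apply: eq_bigr => j _; rewrite !mxE.
exact: dot_sqr_le.
Qed.

Lemma opnorm_ub n (M : 'M[R]_n) x : vnorm x <= 1 -> vnorm (M *m x) <= opnorm M.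
Proof.
move=> x1; apply: ub_le_sup; last by exists x.
exists (Num.sqrt (\sum_i dot (row i M)^T (row i M)^T)) => _ [y /= y1 <-].
by apply: le_trans (mxbound_rows M y) _; rewrite ler_piMr ?sqrtr_ge0.
Qed.

Lemma opnorm_ge0 n (M : 'M[R]_n) : 0 <= opnorm M.
Proof. by have := @opnorm_ub n M 0; rewrite mulmx0 vnorm0; apply; apply: ler01. Qed.

Lemma mxbound_opnorm n (M : 'M[R]_n) c : opnorm M <= c -> mxbound M c.
Proof.
move=> Mc x; apply: le_trans (_ : opnorm M * vnorm x <= _); last first.
  by rewrite ler_wpM2r ?vnorm_ge0.
have [->|x0] := eqVneq x 0; first by rewrite mulmx0 vnorm0 mulr0.
have xpos : 0 < vnorm x by rewrite lt_def vnorm_eq0 x0 vnorm_ge0.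
have := @opnorm_ub n M ((vnorm x)^-1 *: x).
rewrite -scalemxAr !vnormZ ger0_norm ?invr_ge0 ?vnorm_ge0 // mulVf ?gt_eqF //.
by rewrite lexx ler_pdivrMl // mulrC; apply.
Qed.

Lemma opnorm_le n (M : 'M[R]_n) c : 0 <= c -> mxbound M c -> opnorm M <= c.
Proof.
move=> c0 Mc; apply: ge_sup; first by exists (vnorm (M *m 0)), 0; rewrite //= vnorm0 ler01.
by move=> _ [x /= x1 <-]; apply: le_trans (Mc x) _; rewrite ler_piMr.
Qed.

End OperatorNorm.

Section NormalizedLaplacian.
Variable R : realType.
Implicit Types (n : nat) (t : R).

Lemma Lsym_sym n (A : 'M[R]_n) : A^T = A -> (Lsym A)^T = Lsym A.
Proof.
move=> sA; rewrite /Lsym linearB /= trmx1 !trmx_mul /diag_inv_sqrt tr_diag_mx sA.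
by rewrite mulmxA.
Qed.

Lemma adjacency_qf_le n (A : 'M[R]_n) (y : 'cV[R]_n) : A^T = A -> (forall i j, 0 <= A i j) ->
  `|dot y (A *m y)| <= \sum_i deg A i * y i 0 ^+ 2.
Proof.
move=> sA A_ge0.
have qfE : dot y (A *m y) = \sum_i \sum_j A i j * (y i 0 * y j 0).
  apply: eq_bigr => i _; rewrite mxE mulr_sumr.
  by apply: eq_bigr => j _; rewrite mulrCA mulrA.
(* [2 y_i y_j] lies between [-(y_i^2 + y_j^2)] and [y_i^2 + y_j^2], and by symmetry of [A]
   the weighted sum [W] of [y_i^2 + y_j^2] is twice the right-hand side. *)
pose W := \sum_i \sum_j A i j * (y i 0 ^+ 2 + y j 0 ^+ 2).
have WE : W = 2 * \sum_i deg A i * y i 0 ^+ 2.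
  have -> : W = \sum_i \sum_j A i j * y i 0 ^+ 2 + \sum_j \sum_i A i j * y j 0 ^+ 2.
    rewrite [X in _ = _ + X]exchange_big /= -big_split; apply: eq_bigr => i _.
    by rewrite -big_split; apply: eq_bigr => j _; rewrite mulrDr.
  have rows : \sum_i \sum_j A i j * y i 0 ^+ 2 = \sum_i deg A i * y i 0 ^+ 2.
    by apply: eq_bigr => i _; rewrite /deg mulr_suml.
  have cols : \sum_j \sum_i A i j * y j 0 ^+ 2 = \sum_i deg A i * y i 0 ^+ 2.
    apply: eq_bigr => j _; rewrite /deg mulr_suml; apply: eq_bigr => i _.
    by rewrite -{1}sA mxE.
  by rewrite rows cols mulr2n mulrDl mul1r.
have up : 2 * dot y (A *m y) <= W.
  rewrite qfE mulr_sumr; apply: ler_sum => i _; rewrite mulr_sumr; apply: ler_sum => j _.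
  by have := A_ge0 i j; have := sqr_ge0 (y i 0 - y j 0); nra.
have lo : - W <= 2 * dot y (A *m y).
  rewrite qfE mulr_sumr -sumrN; apply: ler_sum => i _.
  rewrite mulr_sumr -sumrN; apply: ler_sum => j _.
  by have := A_ge0 i j; have := sqr_ge0 (y i 0 + y j 0); nra.
by rewrite ler_norml; apply/andP; split; lra.
Qed.

Lemma Lsym_qf n (A : 'M[R]_n) : A^T = A -> (forall i j, 0 <= A i j) ->
  forall x, 0 <= dot x (Lsym A *m x) <= 2 * dot x x.
Proof.
move=> sA A_ge0 x; set Dh := diag_inv_sqrt (deg A).
have sDh : Dh^T = Dh by rewrite /Dh /diag_inv_sqrt tr_diag_mx.
have qfE : dot x (Lsym A *m x) = dot x x - dot (Dh *m x) (A *m (Dh *m x)).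
  by rewrite /Lsym -/Dh mulmxBl mul1mx dotBr -!mulmxA (dot_mulmx Dh) sDh.
(* the junk value [(sqrt 0)^-1 = 0] only makes the weighted norm smaller *)
have weighted : \sum_i deg A i * (Dh *m x) i 0 ^+ 2 <= dot x x.
  rewrite dot_sqr; apply: ler_sum => i _.
  rewrite /Dh /diag_inv_sqrt mul_diag_mx !mxE exprMn exprVn sqr_sqrtr; last first.
    by apply: sumr_ge0.
  have [->|d0] := eqVneq (deg A i) 0; first by rewrite !mul0r sqr_ge0.
  by rewrite mulrA mulfV // mul1r.
have := adjacency_qf_le (Dh *m x) sA A_ge0.
by rewrite qfE ler_norml => /andP [h1 h2]; apply/andP; split; lra.
Qed.

Lemma shifted_Lsym_qf n (A : 'M[R]_n) t : A^T = A -> (forall i j, 0 <= A i j) ->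
  forall x, t * dot x x <= dot x ((Lsym A + t%:M) *m x) <= (2 + t) * dot x x.
Proof.
move=> sA A_ge0 x; have /andP [h1 h2] := Lsym_qf sA A_ge0 x.
by rewrite mulmxDl mul_scalar_mx dotDr dotZr; apply/andP; split; lra.
Qed.

Lemma EApos_sym n k (c : 'I_n -> 'I_k) (p eta : R) : (EApos c p eta)^T = EApos c p eta.
Proof. by apply/matrixP => i j; rewrite !mxE eq_sym [c j == _]eq_sym. Qed.

Lemma EAneg_sym n k (c : 'I_n -> 'I_k) (p eta : R) : (EAneg c p eta)^T = EAneg c p eta.
Proof. by apply/matrixP => i j; rewrite !mxE eq_sym [c j == _]eq_sym. Qed.

Lemma EApos_ge0 n k (c : 'I_n -> 'I_k) (p eta : R) : 0 <= p -> 0 <= eta <= 1 ->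
  forall i j, 0 <= EApos c p eta i j.
Proof.
move=> p0 /andP [e0 e1] i j; rewrite mxE.
by case: eqP => // _; case: eqP => _; rewrite mulr_ge0 // subr_ge0.
Qed.

Lemma EAneg_ge0 n k (c : 'I_n -> 'I_k) (p eta : R) : 0 <= p -> 0 <= eta <= 1 ->
  forall i j, 0 <= EAneg c p eta i j.
Proof.
move=> p0 /andP [e0 e1] i j; rewrite mxE.
by case: eqP => // _; case: eqP => _; rewrite mulr_ge0 // subr_ge0.
Qed.

End NormalizedLaplacian.

Section InverseSqrtPerturbation.
Variable R : realType.
Implicit Types (n : nat) (s t : R).

Lemma psdE n (S : 'M[R]_n) : psd S <-> forall x, 0 <= dot x (S *m x).
Proof. by split => S_ge0 x; have := S_ge0 x; rewrite -mulmxA dot_trmx. Qed.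

Lemma psd_sqrt_spec n (P : 'M[R]_n) t : P^T = P -> 0 <= t ->
  (forall x, t * dot x x <= dot x (P *m x)) ->
  [/\ (psd_sqrt P)^T = psd_sqrt P, psd_sqrt P *m psd_sqrt P = P &
      forall x, Num.sqrt t * dot x x <= dot x (psd_sqrt P *m x)].
Proof.
move=> sP t0 P_low.
have P_ge0 x : 0 <= dot x (P *m x).
  by apply: le_trans (P_low x); rewrite mulr_ge0 ?dot_ge0.
have [S0 [sS0 S0_ge0 S0S0]] := psd_sqrt_exists sP P_ge0.
have [sS [/psdE S_ge0 SS]] : [set S | S^T = S /\ psd S /\ S *m S = P]%classic (psd_sqrt P).
  by apply: xgetPex; exists S0; split => //; split => //; apply/psdE.
split => // x; apply: psd_sqrt_qf_lower => // y.
by rewrite SS; apply: P_low.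
Qed.

Lemma qf_lower_unitmx n (S : 'M[R]_n) s : 0 < s ->
  (forall x, s * dot x x <= dot x (S *m x)) -> S \in unitmx.
Proof.
move=> s0 S_low; rewrite -unitmx_tr -row_free_unit; apply: inj_row_free => v vS.
have Sv : S *m v^T = 0 by rewrite -[S]trmxK -trmx_mul vS trmx0.
have := S_low v^T; rewrite Sv dot0r pmulr_rle0 // => vv.
by apply: trmx_inj; rewrite trmx0; apply/eqP; rewrite -dot_eq0 eq_le vv dot_ge0.
Qed.

Lemma qf_lower_mxbound_invmx n (S : 'M[R]_n) s : 0 < s ->
  (forall x, s * dot x x <= dot x (S *m x)) -> mxbound (invmx S) s^-1.
Proof.
move=> s0 S_low x; set z := invmx S *m x.
have xE : x = S *m z by rewrite /z mulmxA mulmxV ?mul1mx // (qf_lower_unitmx s0 S_low).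
suff zx : s * vnorm z <= vnorm x.
  by rewrite -[vnorm z](mulKf (lt0r_neq0 s0)); apply: ler_wpM2l; rewrite // invr_ge0 ltW.
have [->|z0] := eqVneq (vnorm z) 0; first by rewrite mulr0 vnorm_ge0.
have zpos : 0 < vnorm z by rewrite lt_def z0 vnorm_ge0.
rewrite -(ler_pM2r zpos) -mulrA -expr2 vnorm_sqr.
apply: le_trans (S_low z) _; rewrite xE mulrC.
by apply: le_trans (ler_norm _) (dot_le_vnorm _ _).
Qed.

(* At a unit extreme eigenvector [v] of [S - Sb], with eigenvalue [l], the form of
   [S S - Sb Sb = S (S - Sb) + (S - Sb) Sb] is [l (a + b)], where [a, b >= s] are the forms
   of [S] and [Sb] at [v] and [|l| = |a - b| <= a + b]. *)
Lemma sqrt_perturbation n (S Sb : 'M[R]_n.+1) s DP : S^T = S -> Sb^T = Sb -> 0 <= s ->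
  (forall x, s * dot x x <= dot x (S *m x)) -> (forall x, s * dot x x <= dot x (Sb *m x)) ->
  mxbound (S *m S - Sb *m Sb) DP ->
  exists L, [/\ 0 <= L, mxbound (S - Sb) L, L ^+ 2 <= DP & 2 * s * L <= DP].
Proof.
move=> sS sSb s0 S_low Sb_low DPb; set D := S - Sb.
have sD : D^T = D by rewrite /D linearB /= sS sSb.
have [v [l [vv Dv D_top]]] := symmetric_top_eigenvector sD.
set a := dot v (S *m v); set b := dot v (Sb *m v).
have sa : s <= a by have := S_low v; rewrite vv mulr1.
have sb : s <= b by have := Sb_low v; rewrite vv mulr1.
have ab : a - b = l by rewrite /a /b -dotBr -mulmxBl -/D Dv dotZr vv mulr1.
have PE : S *m S - Sb *m Sb = S *m D + D *m Sb.
  by rewrite /D mulmxBr mulmxBl addrA subrK.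
have Pv : dot v ((S *m S - Sb *m Sb) *m v) = l * (a + b).
  rewrite PE mulmxDl dotDr -mulmxA Dv -scalemxAr dotZr -mulmxA dot_mulmx sD Dv dotZl.
  by rewrite mulrDr.
have vn : vnorm v = 1 by rewrite vnormE vv sqrtr1.
have lab : `|l| * (a + b) <= DP.
  rewrite -(@ger0_norm _ (a + b)) -?normrM -?Pv; last lra.
  apply: le_trans (dot_le_vnorm _ _) _; rewrite vn mul1r.
  by apply: le_trans (DPb v) _; rewrite vn mulr1.
have l_ab : `|l| <= a + b by rewrite -ab; apply: le_trans (ler_normB _ _) _; rewrite !ger0_norm; lra.
exists `|l|; split.
- exact: normr_ge0.
- by apply: mxbound_sqr => // x; rewrite -normrX ger0_norm ?sqr_ge0 ?D_top.
- by apply: le_trans lab; rewrite expr2 ler_wpM2l.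
- by apply: le_trans lab; rewrite mulrC ler_wpM2l //; lra.
Qed.

Lemma mxbound_inv_sqrt n (P : 'M[R]_n) t : P^T = P -> 0 < t ->
  (forall x, t * dot x x <= dot x (P *m x)) -> mxbound (inv_sqrt P) (Num.sqrt t)^-1.
Proof.
move=> sP t0 P_low; have [_ _ S_low] := psd_sqrt_spec sP (ltW t0) P_low.
by apply: qf_lower_mxbound_invmx S_low; rewrite sqrtr_gt0.
Qed.

Lemma inv_sqrt_perturbation n (P Pb : 'M[R]_n.+1) t DP : P^T = P -> Pb^T = Pb -> 0 < t ->
  (forall x, t * dot x x <= dot x (P *m x)) -> (forall x, t * dot x x <= dot x (Pb *m x)) ->
  mxbound (P - Pb) DP ->
  exists L, [/\ 0 <= L, L ^+ 2 <= DP, 2 * Num.sqrt t * L <= DP &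
                mxbound (inv_sqrt P - inv_sqrt Pb) (L / t)].
Proof.
move=> sP sPb t0 P_low Pb_low DPb.
have [sS SS S_low] := psd_sqrt_spec sP (ltW t0) P_low.
have [sSb SSb Sb_low] := psd_sqrt_spec sPb (ltW t0) Pb_low.
have st0 : 0 < Num.sqrt t by rewrite sqrtr_gt0.
have DPb' : mxbound (psd_sqrt P *m psd_sqrt P - psd_sqrt Pb *m psd_sqrt Pb) DP.
  by rewrite SS SSb.
have [L [L0 DL L2 L3]] := sqrt_perturbation sS sSb (ltW st0) S_low Sb_low DPb'.
exists L; split => //.
have -> : inv_sqrt P - inv_sqrt Pb = inv_sqrt P *m - (psd_sqrt P - psd_sqrt Pb) *m inv_sqrt Pb.
  rewrite mulmxN mulNmx mulmxBr mulmxBl mulVmx ?(qf_lower_unitmx st0 S_low) // mul1mx.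
  by rewrite -mulmxA mulmxV ?(qf_lower_unitmx st0 Sb_low) // mulmx1 opprB.
have -> : L / t = (Num.sqrt t)^-1 * L * (Num.sqrt t)^-1.
  by rewrite mulrAC -invfM -expr2 sqr_sqrtr // ?ltW // mulrC.
apply: mxboundM; rewrite ?mulr_ge0 ?invr_ge0 ?sqrtr_ge0 //.
- by apply: mxboundM; rewrite ?invr_ge0 ?sqrtr_ge0 //; [apply: mxbound_inv_sqrt | apply: mxboundN].
- exact: mxbound_inv_sqrt.
Qed.

Lemma mxbound_sandwichB n (X Y Q Qb : 'M[R]_n) r e q dQ :
  0 <= r -> 0 <= e -> 0 <= q -> 0 <= dQ ->
  mxbound X r -> mxbound Y r -> mxbound (X - Y) e -> mxbound Qb q -> mxbound (Q - Qb) dQ ->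
  mxbound (X *m Q *m X - Y *m Qb *m Y) (r * dQ * r + (e * q * r + r * q * e)).
Proof.
move=> r0 e0 q0 dQ0 Xr Yr XYe Qbq QdQ.
have -> : X *m Q *m X - Y *m Qb *m Y
    = X *m (Q - Qb) *m X + ((X - Y) *m Qb *m X + Y *m Qb *m (X - Y)).
  by rewrite !mulmxBl !mulmxBr !mulmxBl !addrA !subrK.
apply: mxboundD; last apply: mxboundD.
- exact: mxboundM (mulr_ge0 r0 dQ0) (mxboundM r0 Xr QdQ) Xr.
- exact: mxboundM (mulr_ge0 e0 q0) (mxboundM e0 XYe Qbq) Xr.
- exact: mxboundM (mulr_ge0 r0 q0) (mxboundM r0 Yr Qbq) XYe.
Qed.

Lemma sandwich_perturbation_arith (t L DP DQ q alpha : R) : 0 < t -> 0 <= L ->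
  L ^+ 2 <= DP -> 2 * Num.sqrt t * L <= DP -> 0 <= DQ -> q <= 2 * alpha -> 0 <= q ->
  (Num.sqrt t)^-1 * DQ * (Num.sqrt t)^-1
    + (L / t * q * (Num.sqrt t)^-1 + (Num.sqrt t)^-1 * q * (L / t))
  <= (alpha + DQ) / t * (DP / t + 2 * Num.sqrt (DP / t)) + DQ / t.
Proof.
move=> t0 L0 L2 L3 DQ0 q_alpha q0.
set s := Num.sqrt t; have s0 : 0 < s by rewrite sqrtr_gt0.
have ss : s ^+ 2 = t by rewrite sqr_sqrtr // ltW.
set u := Num.sqrt (DP / t); have u0 : 0 <= u by rewrite sqrtr_ge0.
have DP0 : 0 <= DP by apply: le_trans L2; rewrite sqr_ge0.
have uu : u ^+ 2 = DP / t by rewrite sqr_sqrtr // divr_ge0 // ltW.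
(* in the unit [m = L / sqrt t] the two hypotheses on [L] read [m <= u] and [2 m <= u^2] *)
set m := L / s; have m0 : 0 <= m by rewrite divr_ge0 // ltW.
have mu : m <= u.
  rewrite -ler_sqr ?nnegrE // uu /m expr_div_n ss.
  by rewrite ler_wpM2r // invr_ge0 ltW.
have m2u : 2 * m <= u ^+ 2.
  have -> : 2 * m = 2 * s * L / t by rewrite /m -ss; field; rewrite gt_eqF.
  by rewrite uu ler_wpM2r // invr_ge0 ltW.
have key : 2 * q * m <= (alpha + DQ) * (u ^+ 2 + 2 * u).
  have : 0 <= (2 * alpha - q) * m by rewrite mulr_ge0 // subr_ge0.
  have : 0 <= DQ * (u ^+ 2 + 2 * u) by rewrite mulr_ge0 // addr_ge0 ?sqr_ge0 ?mulr_ge0.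
  have : 0 <= alpha * (u ^+ 2 + 2 * u - 4 * m) by rewrite mulr_ge0 //; lra.
  nra.
have -> : s^-1 * DQ * s^-1 + (L / t * q * s^-1 + s^-1 * q * (L / t)) = (DQ + 2 * q * m) / t.
  by rewrite /m -ss; field; rewrite gt_eqF.
rewrite -uu; have -> : (alpha + DQ) / t * (u ^+ 2 + 2 * u) + DQ / t
                      = ((alpha + DQ) * (u ^+ 2 + 2 * u) + DQ) / t.
  by field; rewrite gt_eqF.
by apply: ler_wpM2r; [rewrite invr_ge0 ltW | lra].
Qed.

Lemma inv_sqrt_sandwich_perturbation n (P Pb Q Qb : 'M[R]_n.+1) t q alpha DP DQ :
  P^T = P -> Pb^T = Pb -> 0 < t ->
  (forall x, t * dot x x <= dot x (P *m x)) -> (forall x, t * dot x x <= dot x (Pb *m x)) ->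
  mxbound Qb q -> 0 <= q <= 2 * alpha ->
  opnorm (P - Pb) <= DP -> opnorm (Q - Qb) <= DQ ->
  opnorm (inv_sqrt P *m Q *m inv_sqrt P - inv_sqrt Pb *m Qb *m inv_sqrt Pb)
  <= (alpha + DQ) / t * (DP / t + 2 * Num.sqrt (DP / t)) + DQ / t.
Proof.
move=> sP sPb t0 P_low Pb_low Qbq /andP [q0 q_alpha] DPb DQb.
have DQ0 : 0 <= DQ := le_trans (opnorm_ge0 _) DQb.
have [L [L0 L2 L3 XY]] := inv_sqrt_perturbation sP sPb t0 P_low Pb_low (mxbound_opnorm DPb).
have r0 : 0 <= (Num.sqrt t)^-1 by rewrite invr_ge0 sqrtr_ge0.
have Lt0 : 0 <= L / t by rewrite divr_ge0 // ltW.
apply: le_trans (sandwich_perturbation_arith t0 L0 L2 L3 DQ0 q_alpha q0).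
apply: opnorm_le.
  have := mulr_ge0 (mulr_ge0 r0 DQ0) r0; have := mulr_ge0 (mulr_ge0 Lt0 q0) r0.
  by have := mulr_ge0 (mulr_ge0 r0 q0) Lt0; lra.
apply: mxbound_sandwichB XY Qbq (mxbound_opnorm DQb) => //.
- exact: mxbound_inv_sqrt.
- exact: mxbound_inv_sqrt.
Qed.

End InverseSqrtPerturbation.

Section SSBM.
Variable R : realType.

Lemma shifted_Lsym_sym n (A : 'M[R]_n) t : A^T = A -> (Lsym A + t%:M)^T = Lsym A + t%:M.
Proof. by move=> sA; rewrite linearD /= Lsym_sym // tr_scalar_mx. Qed.

Lemma mxbound_symmetric_qf n (A : 'M[R]_n.+1) c : A^T = A ->
  (forall x, `|dot x (A *m x)| <= c * dot x x) -> mxbound A c.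
Proof.
move=> sA A_qf; have [v [l [vv Av A_top]]] := symmetric_top_eigenvector sA.
have /andP [lc cl] : - c <= l <= c.
  by rewrite -ler_norml; have := A_qf v; rewrite Av dotZr vv !mulr1.
apply: mxbound_sqr => [|x]; first lra.
apply: le_trans (A_top x) _; rewrite ler_wpM2r ?dot_ge0 //; nra.
Qed.

Lemma mxbound_shifted_Lsym n (A : 'M[R]_n.+1) t : A^T = A -> (forall i j, 0 <= A i j) ->
  0 <= t -> mxbound (Lsym A + t%:M) (2 + t).
Proof.
move=> sA A_ge0 t0; apply: mxbound_symmetric_qf; first exact: shifted_Lsym_sym.
move=> x; have /andP [lo hi] := shifted_Lsym_qf t sA A_ge0 x.
have := mulr_ge0 t0 (dot_ge0 x).
by rewrite ler_norml => ?; apply/andP; split; lra.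
Qed.

Lemma min_cluster_gt0 n k (c : 'I_n -> 'I_k) : (0 < n)%N ->
  (forall l : 'I_k, exists i : 'I_n, c i = l) -> (0 < min_cluster c)%N.
Proof.
move=> n0 c_onto; rewrite /min_cluster; elim/big_ind: _ => // [x y x0 y0|l _].
  by rewrite leq_min x0 y0.
by have [i ci] := c_onto l; apply/card_gt0P; exists i; rewrite inE; apply/eqP.
Qed.

Lemma min_cluster_degree_ge0 n k (c : 'I_n -> 'I_k) (p eta : R) : (0 < n)%N ->
  (forall l : 'I_k, exists i : 'I_n, c i = l) -> 0 <= p -> 0 <= eta -> eta <= 1 / 2 ->
  0 <= p * (n%:R * ((min_cluster c)%:R / n%:R) * (1 - 2 * eta) + n%:R * eta - (1 - eta)).
Proof.
move=> n0 c_onto p0 eta0 eta_half; apply: mulr_ge0 => //.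
have -> : n%:R * ((min_cluster c)%:R / n%:R) = (min_cluster c)%:R :> R.
  by rewrite mulrC divfK // pnatr_eq0 -lt0n.
have m1 : 1 <= (min_cluster c)%:R :> R by rewrite ler1n min_cluster_gt0.
have n1 : 1 <= n%:R :> R by rewrite ler1n.
have h1 : 0 <= ((min_cluster c)%:R - 1) * (1 - 2 * eta) by rewrite mulr_ge0 ?subr_ge0 //; lra.
have h2 : 0 <= (n%:R - 1) * eta by rewrite mulr_ge0 ?subr_ge0.
lra.
Qed.

End SSBM.

Theorem mainTheorem14 (R : realType) (n k : nat) (c : 'I_n -> 'I_k)
    (p eta taup taum DeltaP DeltaQ : R) (Apos Aneg : 'M[R]_n) :
  (2 <= n)%N -> (2 <= k)%N ->
  0 < p <= 1 -> 0 <= eta < 1 / 2 ->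
  (forall l : 'I_k, exists i : 'I_n, c i = l) ->
  (* Apos, Aneg : adjacency matrices of a realization (simple signed graph) *)
  (forall i j, Apos i j = 0 \/ Apos i j = 1) ->
  (forall i j, Aneg i j = 0 \/ Aneg i j = 1) ->
  Apos^T = Apos -> Aneg^T = Aneg ->
  (forall i, Apos i i = 0) -> (forall i, Aneg i i = 0) ->
  (forall i j, Apos i j * Aneg i j = 0) ->
  (forall i, 0 < deg Apos i) -> (forall i, 0 < deg Aneg i) ->
  0 < taup -> 0 <= taum ->
  let P := Lsym Aneg + taup%:M in
  let Pbar := Lsym (EAneg c p eta) + taup%:M in
  let Q := Lsym Apos + taum%:M in
  let Qbar := Lsym (EApos c p eta) + taum%:M in
  opnorm (P - Pbar) <= DeltaP ->
  opnorm (Q - Qbar) <= DeltaQ ->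
  let s := (min_cluster c)%:R / n%:R in
  let dsp := p * (n%:R * s * (1 - 2 * eta) + n%:R * eta - (1 - eta)) in
  let alpha := 1 + taum + p * (1 - eta) / dsp in
  opnorm (Tmat (Lsym Apos) (Lsym Aneg) taup taum
          - Tmat (Lsym (EApos c p eta)) (Lsym (EAneg c p eta)) taup taum)
  <= (alpha + DeltaQ) / taup * (DeltaP / taup + 2 * Num.sqrt (DeltaP / taup))
     + DeltaQ / taup.
Proof.
case: n c Apos Aneg => [//|n] c Apos Aneg _ _ /andP [p0 _] /andP [eta0 eta_half] c_onto.
move=> Apos01 Aneg01 sApos sAneg _ _ _ _ _ taup0 taum0 P Pb Q Qb DPb DQb; cbv zeta.
set s := (min_cluster c)%:R / _; set dsp := p * (_ - (1 - eta)); set alpha := 1 + taum + _.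
have eta01 : 0 <= eta <= 1 by apply/andP; split; lra.
have adj_ge0 (A : 'M[R]_n.+1) : (forall i j, A i j = 0 \/ A i j = 1) -> forall i j, 0 <= A i j.
  by move=> A01 i j; case: (A01 i j) => ->.
have dsp0 : 0 <= dsp := min_cluster_degree_ge0 (ltn0Sn n) c_onto (ltW p0) eta0 (ltW eta_half).
have q_alpha : 0 <= 2 + taum <= 2 * alpha.
  have : 0 <= p * (1 - eta) / dsp.
    by apply: divr_ge0 dsp0; apply: mulr_ge0; [exact: ltW | lra].
  by rewrite /alpha => ?; apply/andP; split; lra.
rewrite /Tmat; apply: (inv_sqrt_sandwich_perturbation _ _ taup0 _ _ _ q_alpha DPb DQb).
- exact: shifted_Lsym_sym.
- exact/shifted_Lsym_sym/EAneg_sym.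
- by move=> x; have /andP [] := shifted_Lsym_qf taup sAneg (adj_ge0 _ Aneg01) x.
- by move=> x; have /andP [] := shifted_Lsym_qf taup (EAneg_sym c p eta) (EAneg_ge0 c (ltW p0) eta01) x.
- exact: mxbound_shifted_Lsym (EApos_sym c p eta) (EApos_ge0 c (ltW p0) eta01) taum0.
Qed.
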